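(* Let $\alpha$ be an ordinal and let $\mathcal{X},\mathcal{Y}$ be families of metric spaces. If $F\colon\mathcal{X}\to\mathcal{Y}$ is a coarse embedding and $\mathcal{Y}\in\mathfrak{C}_\alpha$, then $\mathcal{X}\in\mathfrak{C}_\alpha$.
   Context: A family $\mathcal{U}$ of metric subspaces of a metric space $(X,d)$ is $r$-disjoint if $d(x,y)>r$ whenever $x\in U$, $y\in U'$, $U\neq U'$ in $\mathcal{U}$. For families $\mathcal{X},\mathcal{Y}$ and $R\in\mathbb{R}^{\mathbb{N}}$, $\mathcal{X}\xrightarrow{R}\mathcal{Y}$ means: there is an integer $k$ such that for each $X\in\mathcal{X}$ there are subcollections $\mathcal{U}_1,\dots,\mathcal{U}_k\subseteq\mathcal{Y}$ of subspaces of $X$, each $\mathcal{U}_i$ being $R_i$-disjoint, with $\bigcup_i\mathcal{U}_i$ covering $X$. A family is bounded if the diameters of its members are uniformly bounded. $\mathfrak{C}_0$ is the class of bounded families; for an ordinal $\alpha>0$, $\mathfrak{C}_\alpha$ is the class of families $\mathcal{X}$ such that for every $R\in\mathbb{R}^{\mathbb{N}}$ there exist $\beta<\alpha$ and $\mathcal{Y}\in\mathfrak{C}_\beta$ with $\mathcal{X}\xrightarrow{R}\mathcal{Y}$. A map $F\colon\mathcal{X}\to\mathcal{Y}$ of families is a collection of maps $f\colon X_f\to Y_f$ with $\{X_f\}_{f\in F}=\mathcal{X}$ and $Y_f\in\mathcal{Y}$. It is a coarse embedding if there are non-decreasing $\rho_1,\rho_2\colon[0,\infty)\to[0,\infty)$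 with $\rho_1$ proper such that $\rho_1(d(x,x'))\le d(f(x),f(x'))\le\rho_2(d(x,x'))$ for all $f\in F$ and $x,x'\in X_f$. *)

From Stdlib Require Import Reals.
Open Scope R_scope.

(* A metric space whose carrier is a subset [pts] of an ambient type T,
   with distance function [dist] (only its values on [pts] matter). *)
Record MS (T : Type) := mkMS { pts : T -> Prop ; dist : T -> T -> R }.
Arguments mkMS {T}.
Arguments pts {T}.
Arguments dist {T}.

Definition is_metric {T} (X : MS T) : Prop :=
  (forall x y, pts X x -> pts X y -> 0 <= dist X x y) /\
  (forall x y, pts X x -> pts X y -> (dist X x y = 0 <-> x = y)) /\
  (forall x y, pts X x -> pts X y -> dist X x y = dist X y x) /\
  (forall x y z, pts X x -> pts X y -> pts X z ->
     dist X x z <= dist X x y + dist X y z).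

Definition mfamily (T : Type) := MS T -> Prop.

Definition metric_family {T} (FX : mfamily T) : Prop :=
  forall X, FX X -> is_metric X.

Definition subspace {T} (Y X : MS T) : Prop :=
  dist Y = dist X /\ (forall x, pts Y x -> pts X x).

Definition rdisjoint {T} (r : R) (U : mfamily T) : Prop :=
  forall Y Y', U Y -> U Y' -> Y <> Y' ->
    forall x y, pts Y x -> pts Y' y -> r < dist Y x y.

(* X -R-> Y  (indices i = 1..k, using R_i = R i). *)
Definition arrowR {T} (Rs : nat -> R) (FX FY : mfamily T) : Prop :=
  exists k : nat, forall X, FX X ->
    exists U : nat -> mfamily T,
      (forall i, (1 <= i <= k)%nat -> forall Y, U i Y -> FY Y /\ subspace Y X) /\
      (forall i, (1 <= i <= k)%nat -> rdisjoint (Rs i) (U i)) /\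
      (forall x, pts X x ->
         exists i, (1 <= i <= k)%nat /\ exists Y, U i Y /\ pts Y x).

Definition bounded_family {T} (FX : mfamily T) : Prop :=
  exists D : R, forall X, FX X -> forall x y, pts X x -> pts X y -> dist X x y <= D.

(* The classes C_alpha, for alpha in a well-ordered type (O, lt) of ordinals.
   alpha = 0 means alpha is the least element. *)
Inductive inC {T : Type} {O : Type} (lt : O -> O -> Prop) : O -> mfamily T -> Prop :=
| inC_zero : forall alpha FX,
    (forall b, ~ lt b alpha) -> bounded_family FX -> inC lt alpha FX
| inC_succ : forall alpha FX,
    ~ (forall b, ~ lt b alpha) ->
    (forall Rs : nat -> R, exists beta, lt beta alpha /\
        exists FY : mfamily T, metric_family FY /\ inC lt beta FY /\ arrowR Rs FX FY) ->
    inC lt alpha FX.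

Definition strict_well_order {O : Type} (lt : O -> O -> Prop) : Prop :=
  well_founded lt /\
  (forall a b c, lt a b -> lt b c -> lt a c) /\
  (forall a b, lt a b \/ a = b \/ lt b a).

(* A map of families: a collection of maps f : X_f -> Y_f. *)
Record FMap (T1 T2 : Type) := mkFMap { src : MS T1 ; tgt : MS T2 ; fn : T1 -> T2 }.
Arguments src {T1 T2}.
Arguments tgt {T1 T2}.
Arguments fn {T1 T2}.

Definition map_of_families {T1 T2} (F : FMap T1 T2 -> Prop)
    (FX : mfamily T1) (FY : mfamily T2) : Prop :=
  (forall f, F f -> FX (src f) /\ FY (tgt f) /\
      (forall x, pts (src f) x -> pts (tgt f) (fn f x))) /\
  (forall X, FX X -> exists f, F f /\ src f = X).

Definition nondecreasing0 (rho : R -> R) : Prop :=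
  forall s t, 0 <= s -> s <= t -> rho s <= rho t.

Definition nonneg0 (rho : R -> R) : Prop := forall t, 0 <= t -> 0 <= rho t.

Definition proper0 (rho : R -> R) : Prop :=
  forall M, exists N, forall t, 0 <= t -> rho t <= M -> t <= N.

Definition coarse_embedding {T1 T2} (F : FMap T1 T2 -> Prop) : Prop :=
  exists rho1 rho2 : R -> R,
    nonneg0 rho1 /\ nonneg0 rho2 /\ nondecreasing0 rho1 /\ nondecreasing0 rho2 /\
    proper0 rho1 /\
    forall f, F f -> forall x x', pts (src f) x -> pts (src f) x' ->
      rho1 (dist (src f) x x') <= dist (tgt f) (fn f x) (fn f x') /\
      dist (tgt f) (fn f x) (fn f x') <= rho2 (dist (src f) x x').

(* Pull every cover back along the embedding.  Given R, cover the target
   family with R'-disjoint pieces, R'_i = rho2 (max 0 R_i); the preimages of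
   the pieces are R-disjoint because points within distance R_i are sent
   within rho2 R_i, and the family of preimages embeds coarsely into the family
   of pieces, so it lies in a lower class by induction.  In the base case
   properness of rho1 turns a uniform diameter bound on the targets into one
   on the sources. *)

From Stdlib Require Import Reals Lra.
Open Scope R_scope.

Lemma is_metric_restrict {T} (X : MS T) (P : T -> Prop) :
  is_metric X -> is_metric (mkMS (fun x => pts X x /\ P x) (dist X)).
Proof.
  intros [Hpos [Hsep [Hsym Htri]]]; split; [| split; [| split]]; simpl.
  - intros x y [Hx _] [Hy _]; auto.
  - intros x y [Hx _] [Hy _]; auto.
  - intros x y [Hx _] [Hy _]; auto.
  - intros x y z [Hx _] [Hy _] [Hz _]; auto.
Qed.

Lemma dist_nonneg {T} (X : MS T) x y :
  is_metric X -> pts X x -> pts X y -> 0 <= dist X x y.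
Proof. intros [Hpos _]; apply Hpos. Qed.

Definition pull {T1 T2} (f : FMap T1 T2) (Z : MS T2) : MS T1 :=
  mkMS (fun x => pts (src f) x /\ pts Z (fn f x)) (dist (src f)).

Section PullbackFamily.

Context {T1 T2 : Type}.
Variable F : FMap T1 T2 -> Prop.
Variable FZ : mfamily T2.

Definition pull_family : mfamily T1 := fun W =>
  exists f Z, F f /\ FZ Z /\ subspace Z (tgt f) /\ W = pull f Z.

Definition pull_map : FMap T1 T2 -> Prop := fun g =>
  exists f Z, F f /\ FZ Z /\ subspace Z (tgt f) /\ g = mkFMap _ _ (pull f Z) Z (fn f).

Lemma metric_family_pull_family :
  (forall f, F f -> is_metric (src f)) -> metric_family pull_family.
Proof.
  intros Hm W (f & Z & Hf & _ & _ & ->).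
  apply is_metric_restrict, Hm, Hf.
Qed.

Lemma map_of_families_pull_map : map_of_families pull_map pull_family FZ.
Proof.
  split.
  - intros g (f & Z & Hf & HZ & Hsub & ->); simpl.
    split; [exists f, Z; auto |].
    split; [exact HZ |].
    intros x [_ Hx]; exact Hx.
  - intros W (f & Z & Hf & HZ & Hsub & ->).
    exists (mkFMap _ _ (pull f Z) Z (fn f)); split; [| reflexivity].
    exists f, Z; auto.
Qed.

Lemma coarse_embedding_pull_map : coarse_embedding F -> coarse_embedding pull_map.
Proof.
  intros (rho1 & rho2 & Hn1 & Hn2 & Hd1 & Hd2 & Hp & Hce).
  exists rho1, rho2; do 5 (split; [assumption |]).
  intros g (f & Z & Hf & _ & [HdZ _] & ->) x x' [Hx _] [Hx' _]; simpl.
  rewrite HdZ; apply Hce; assumption.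
Qed.

End PullbackFamily.

Lemma bounded_family_of_lower_control {T1 T2} (F : FMap T1 T2 -> Prop)
    (FX : mfamily T1) (FY : mfamily T2) (rho1 : R -> R) :
  metric_family FX -> map_of_families F FX FY -> proper0 rho1 ->
  (forall f, F f -> forall x x', pts (src f) x -> pts (src f) x' ->
     rho1 (dist (src f) x x') <= dist (tgt f) (fn f x) (fn f x')) ->
  bounded_family FY -> bounded_family FX.
Proof.
  intros HmX [Hsrc Hcov] Hp Hlow [D HD].
  destruct (Hp D) as [N HN]; exists N.
  intros X HX x y Hx Hy.
  destruct (Hcov X HX) as [f [Hf <-]].
  destruct (Hsrc f Hf) as (HXf & HYf & Hpt).
  apply HN; [now apply dist_nonneg; auto |].
  eapply Rle_trans; [now apply Hlow | apply HD; auto].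
Qed.

(* [rho2] is only monotone on nonnegative arguments, hence the [Rmax 0 r]. *)
Lemma rdisjoint_pull {T1 T2} (f : FMap T1 T2) (U : mfamily T2) (rho2 : R -> R) (r : R) :
  is_metric (src f) -> nondecreasing0 rho2 ->
  (forall x x', pts (src f) x -> pts (src f) x' ->
     dist (tgt f) (fn f x) (fn f x') <= rho2 (dist (src f) x x')) ->
  (forall Z, U Z -> subspace Z (tgt f)) ->
  rdisjoint (rho2 (Rmax 0 r)) U ->
  rdisjoint r (fun W => exists Z, U Z /\ W = pull f Z).
Proof.
  intros Hm Hd2 Hup Hsub Hdisj W W' [Z [HZ ->]] [Z' [HZ' ->]] Hne x y [Hx Hzx] [Hy Hzy].
  simpl.
  assert (HZne : Z <> Z') by (intros ->; apply Hne; reflexivity).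
  pose proof (Hdisj Z Z' HZ HZ' HZne _ _ Hzx Hzy) as Hfar.
  destruct (Hsub Z HZ) as [HdZ _]; rewrite HdZ in Hfar.
  destruct (Rlt_or_le r (dist (src f) x y)) as [Hlt | Hle]; [exact Hlt | exfalso].
  assert (Hmono : rho2 (dist (src f) x y) <= rho2 (Rmax 0 r)).
  { apply Hd2; [now apply dist_nonneg |].
    eapply Rle_trans; [exact Hle | apply Rmax_r]. }
  specialize (Hup x y Hx Hy); lra.
Qed.

Lemma arrowR_pull {T1 T2} (F : FMap T1 T2 -> Prop) (FX : mfamily T1)
    (FY FZ : mfamily T2) (rho2 : R -> R) (Rs : nat -> R) :
  metric_family FX -> map_of_families F FX FY -> nondecreasing0 rho2 ->
  (forall f, F f -> forall x x', pts (src f) x -> pts (src f) x' ->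
     dist (tgt f) (fn f x) (fn f x') <= rho2 (dist (src f) x x')) ->
  arrowR (fun i => rho2 (Rmax 0 (Rs i))) FY FZ ->
  arrowR Rs FX (pull_family F FZ).
Proof.
  intros HmX [Hsrc Hcov] Hd2 Hup [k Hk]; exists k.
  intros X HX.
  destruct (Hcov X HX) as [f [Hf <-]].
  destruct (Hsrc f Hf) as (HXf & HYf & Hpt).
  destruct (Hk (tgt f) HYf) as (U & HU & Hdisj & Hcover).
  exists (fun i W => exists Z, U i Z /\ W = pull f Z).
  split; [| split].
  - intros i Hi W [Z [HZ ->]].
    destruct (HU i Hi Z HZ) as [HFZ Hsub].
    split; [exists f, Z; auto |].
    split; [reflexivity |].
    intros x [Hx _]; exact Hx.
  - intros i Hi.
    apply (rdisjoint_pull f (U i) rho2); auto.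
    intros Z HZ; apply (HU i Hi Z HZ).
  - intros x Hx.
    destruct (Hcover (fn f x) (Hpt x Hx)) as (i & Hi & Z & HZ & HZx).
    exists i; split; [exact Hi |].
    exists (pull f Z); split; [exists Z; auto | split; assumption].
Qed.

Lemma inC_coarse_embedding_preimage (O : Type) (lt : O -> O -> Prop)
    (Hwf : well_founded lt) (T1 T2 : Type) (alpha : O) :
  forall (FX : mfamily T1) (FY : mfamily T2) (F : FMap T1 T2 -> Prop),
  metric_family FX -> map_of_families F FX FY -> coarse_embedding F ->
  inC lt alpha FY -> inC lt alpha FX.
Proof.
  induction alpha as [alpha IH] using (well_founded_ind Hwf).
  intros FX FY F HmX HF HCE HY.
  pose proof HCE as (rho1 & rho2 & _ & _ & _ & Hd2 & Hp & Hce).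
  destruct HY as [alpha FY Hmin HB | alpha FY Hmin Hstep].
  - apply inC_zero; [exact Hmin |].
    apply (bounded_family_of_lower_control F FX FY rho1); auto.
    intros f Hf x x' Hx Hx'; apply Hce; auto.
  - apply inC_succ; [exact Hmin |]; intros Rs.
    destruct (Hstep (fun i => rho2 (Rmax 0 (Rs i))))
      as (beta & Hlt & FZ & HmZ & HZ & Harrow).
    assert (HmXf : forall f, F f -> is_metric (src f))
      by (intros f Hf; apply HmX, (proj1 HF f Hf)).
    exists beta; split; [exact Hlt |].
    exists (pull_family F FZ); split; [| split].
    + now apply metric_family_pull_family.
    + apply (IH beta Hlt _ FZ (pull_map F FZ)); auto using
        metric_family_pull_family, map_of_families_pull_map, coarse_embedding_pull_map.
    + apply (arrowR_pull F FX FY FZ rho2); auto.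
      intros f Hf x x' Hx Hx'; apply Hce; auto.
Qed.

Theorem theorem3p1 (O : Type) (lt : O -> O -> Prop) (Hwo : strict_well_order lt)
  (alpha : O) (T1 T2 : Type) (FX : mfamily T1) (FY : mfamily T2)
  (F : FMap T1 T2 -> Prop) :
  metric_family FX -> metric_family FY ->
  map_of_families F FX FY -> coarse_embedding F ->
  inC lt alpha FY -> inC lt alpha FX.
Proof.
  intros HmX _ HF HCE HY.
  exact (inC_coarse_embedding_preimage O lt (proj1 Hwo) T1 T2 alpha FX FY F HmX HF HCE HY).
Qed.
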